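(* Let $n$ be a positive integer and let $$A_n' := \{(0,S_1,\dots,S_{2n}) \in \mathbb{Z}^{2n+1} : |S_i - S_{i-1}| = 1 \text{ for } 1\le i\le 2n \ (S_0=0),\ S_1>0,\ S_{2n}=0\},$$ $$B_n' := \{(0,S_1,\dots,S_{2n}) \in \mathbb{Z}^{2n+1} : |S_i - S_{i-1}| = 1 \text{ for } 1\le i\le 2n \ (S_0=0),\ S_i>0 \text{ for all } 1\le i\le 2n\}.$$ For $(0,S_1,\dots,S_{2n})\in A_n'$, let $M:=\max\{S_1,\dots,S_{2n}\}$, let $a_M:=\min\{1\le i\le 2n: S_i=M\}$, $b_0:=0$, and for $k=M-1,M-2,\dots,1$ define inductively $$a_k:=\min\{1\le i\le a_{k+1}: S_i=k\},\qquad b_k:=\max\{1\le i\le a_{k+1}: S_i=k\}.$$ For $\ell=1,\dots,2n$ define $$T_\ell:=\begin{cases}2m-S_\ell & \text{if } a_m\le \ell\le b_m \text{ for some } m\in\{1,\dots,M-1\},\\ 2M-S_\ell & \text{if } \ell\ge a_M,\end{cases}$$ and let $\Phi_1(0,S_1,\dots,S_{2n}):=(0,T_1,\dots,T_{2n})$. Then $\Phi_1$ is a well-defined map from $A_n'$ to $B_n'$ and it is a bijection between $A_n'$ and $B_n'$.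
   Context: These are paths of the $2n$-step simple random walk on $\mathbb{Z}$ started at the origin: $A_n'$ consists of paths whose first step is up and which end at $0$; $B_n'$ consists of paths staying strictly positive at all times $1,\dots,2n$. *)

(* Paths are sequences s = [:: S_0; S_1; ...; S_(2n)] of integers. *)
From mathcomp Require Import all_boot all_order all_algebra.
Set Implicit Arguments. Unset Strict Implicit. Unset Printing Implicit Defensive.
Import Order.TTheory GRing.Theory Num.Theory.
Local Open Scope ring_scope.

Definition walk (n : nat) (s : seq int) : bool :=
  [&& size s == (2 * n).+1, s`_0 == 0 &
      all (fun i => `|s`_i - s`_i.-1| == 1) (iota 1 (2 * n))].

Definition An' (n : nat) : pred (seq int) :=
  fun s => [&& walk n s, 0 < s`_1 & s`_(2 * n) == 0].

Definition Bn' (n : nat) : pred (seq int) :=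
  fun s => walk n s && all (fun i => 0 < s`_i) (iota 1 (2 * n)).

Definition Mx (s : seq int) : int := \big[Num.max/ s`_1]_(1 <= i < size s) s`_i.
(* M as a natural number (M >= 1 on A_n') *)
Definition Mn (s : seq int) : nat := `|Mx s|%N.

Definition minidx (s : seq int) (v : int) (bnd : nat) : nat :=
  head 0%N [seq i <- iota 1 bnd | s`_i == v].
Definition maxidx (s : seq int) (v : int) (bnd : nat) : nat :=
  last 0%N [seq i <- iota 1 bnd | s`_i == v].

(* a_aux s j = a_{M-j} *)
Fixpoint a_aux (s : seq int) (j : nat) : nat :=
  match j with
  | 0 => minidx s (Mx s) (size s).-1
  | j'.+1 => minidx s (Mx s - j'.+1%:R) (a_aux s j')
  end.

Definition a_ (s : seq int) (k : nat) : nat := a_aux s (Mn s - k).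
Definition b_ (s : seq int) (k : nat) : nat := maxidx s k%:R (a_ s k.+1).

(* Phi_1: T_0 = 0; T_l = 2m - S_l if a_m <= l <= b_m (1 <= m <= M-1),
   T_l = 2M - S_l otherwise (i.e. when l >= a_M, by well-definedness). *)
Definition Phi1 (s : seq int) : seq int :=
  mkseq (fun l =>
    if l == 0%N then 0 else
    match [seq m <- iota 1 (Mn s).-1 | (a_ s m <= l <= b_ s m)%N] with
    | m :: _ => 2 * m%:R - s`_l
    | [::] => 2 * (Mn s)%:R - s`_l
    end) (size s).

Definition Phi1_well_defined (n : nat) (s : seq int) : Prop :=
  [/\ has (fun i => s`_i == Mx s) (iota 1 (2 * n)),
      (forall k, (1 <= k < Mn s)%N -> has (fun i => s`_i == k%:R) (iota 1 (a_ s k.+1)))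
    & (forall l, (1 <= l <= 2 * n)%N ->
        (count (fun m => a_ s m <= l <= b_ s m) (iota 1 (Mn s).-1)
          + (a_ s (Mn s) <= l))%N = 1%N)].

From mathcomp Require Import all_boot all_order all_algebra.
From mathcomp Require Import zify.
Set Implicit Arguments. Unset Strict Implicit. Unset Printing Implicit Defensive.
Import Order.TTheory GRing.Theory Num.Theory.
Local Open Scope ring_scope.

(* On A_n' the block [a_m, b_m] is exactly the set of times l at which the
   running maximum R_l = max(S_1, ..., S_l) equals m, and l >= a_M exactly when
   R_l = M, so Phi_1 is Pitman's transform T = 2R - S.  T is again a +-1 walk,
   and T_l >= R_l >= 1.  Since T_i >= R_i, with equality when S_i = R_i, and S
   comes back to its running maximum before that maximum increases, the future
   minimum J_l = min(T_l, ..., T_2n) equals R_l as long as R_l < M = T_2n / 2;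
   hence S_l = 2 min(J_l, T_2n / 2) - T_l.  Conversely, for T in B_n' this
   formula defines a walk in A_n' with running maximum min(J, T_2n / 2), whose
   transform is therefore T. *)

Definition prefix_max (s : seq int) (l : nat) : int :=
  \big[Num.max/ s`_1]_(1 <= i < l.+1) s`_i.

Definition suffix_min (t : seq int) (N l : nat) : int :=
  \big[Num.min/ t`_N]_(l <= i < N) t`_i.

Definition unit_steps (N : nat) (s : seq int) : Prop :=
  forall i, (0 < i <= N)%N -> `|s`_i - s`_i.-1| = 1.

Section PrefixMax.
Variable s : seq int.

Lemma prefix_max0 : prefix_max s 0 = s`_1.
Proof. by rewrite /prefix_max big_geq. Qed.

Lemma prefix_maxS l : prefix_max s l.+1 = Num.max (prefix_max s l) s`_l.+1.
Proof.
have s1_le : s`_1 <= prefix_max s l by exact: bigmax_ge_id.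
rewrite {1}/prefix_max (big_cat_nat_idem (maxxx _) (m := 1) (n := l.+1)) //.
rewrite [\big[_/_]_(l.+1 <= i < l.+2) _]big_ltn //.
rewrite [\big[_/_]_(l.+2 <= i < l.+2) _]big_geq //=.
by rewrite -/(prefix_max s l) [in LHS]maxC -maxA (max_idPr s1_le) maxC.
Qed.

Lemma prefix_max1 : prefix_max s 1 = s`_1.
Proof. by rewrite prefix_maxS prefix_max0 maxxx. Qed.

Lemma le_prefix_max i l : (1 <= i <= l)%N -> s`_i <= prefix_max s l.
Proof. by move=> il; apply: le_bigmax_seq; rewrite ?mem_index_iota; lia. Qed.

Lemma prefix_max_homo : {homo prefix_max s : l l' / (l <= l')%N >-> l <= l'}.
Proof. by move=> l l' ll'; apply: le_bigmax_nat. Qed.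

Lemma prefix_max_attained l :
  (0 < l)%N -> exists2 i, (0 < i <= l)%N & prefix_max s l = s`_i.
Proof.
elim: l => // -[_ _|l IH _]; first by exists 1%N; rewrite ?prefix_max1.
rewrite prefix_maxS; have [i il ->] := IH isT.
by case: (leP s`_i s`_l.+2) => si; [exists l.+2 | exists i]; lia.
Qed.

End PrefixMax.

Section SuffixMin.
Variables (t : seq int) (N : nat).

Lemma suffix_minN : suffix_min t N N = t`_N.
Proof. by rewrite /suffix_min big_geq. Qed.

Lemma suffix_min_rec l :
  (l < N)%N -> suffix_min t N l = Num.min t`_l (suffix_min t N l.+1).
Proof. by move=> lN; rewrite /suffix_min big_ltn. Qed.

Lemma suffix_min_le l i : (l <= i <= N)%N -> suffix_min t N l <= t`_i.
Proof.
case/andP=> li; rewrite leq_eqVlt => /predU1P[->|iN]; first exact: bigmin_le_id.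
by apply: ge_bigmin_seq; rewrite ?mem_index_iota ?li.
Qed.

Lemma suffix_min_ge l c : (l <= N)%N ->
  (forall i, (l <= i <= N)%N -> c <= t`_i) -> c <= suffix_min t N l.
Proof.
move=> lN ct; rewrite /suffix_min big_seq.
by apply: le_bigmin => [|i]; rewrite ?mem_index_iota => *; apply: ct; lia.
Qed.

End SuffixMin.

Lemma head_filter_iota (p : pred nat) m B : has p (iota m B) ->
  let h := head 0%N (filter p (iota m B)) in
  [/\ (m <= h < m + B)%N, p h & forall j, (m <= j < h)%N -> ~~ p j].
Proof.
elim: B m => [|B IH] m //=; case: ifP => [pm _ | npm /IH[mB ph pmin]] /=.
  by split=> [|//|j ?]; [lia | exfalso; lia].
split=> //; first lia.
by move=> j jm; have [->|jm'] := eqVneq j m; [rewrite npm | apply: pmin; lia].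
Qed.

Lemma minidxP (s : seq int) v B : has (fun i => s`_i == v) (iota 1 B) ->
  [/\ (1 <= minidx s v B <= B)%N, s`_(minidx s v B) = v
    & forall j, (1 <= j < minidx s v B)%N -> s`_j != v].
Proof. by case/head_filter_iota=> hB /eqP sv smin; split=> //; lia. Qed.

Lemma minidx_shrink (s : seq int) v B N : has (fun i => s`_i == v) (iota 1 N) ->
  (minidx s v N <= B <= N)%N -> minidx s v B = minidx s v N.
Proof.
move=> hasN hB; have [hitN sN minN] := minidxP hasN.
have [|hitB sB minB] := minidxP (s := s) (v := v) (B := B).
  by apply/hasP; exists (minidx s v N); [rewrite mem_iota; lia | apply/eqP].
case: (ltngtP (minidx s v B) (minidx s v N)) => // lt_hit.
  suff /minN : (1 <= minidx s v B < minidx s v N)%N by rewrite sB eqxx.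
  lia.
suff /minB : (1 <= minidx s v N < minidx s v B)%N by rewrite sN eqxx.
lia.
Qed.

Lemma maxidx_last (s : seq int) v b :
  (0 < b)%N -> s`_b = v -> s`_b.+1 != v -> maxidx s v b.+1 = b.
Proof.
case: b => // b _ sb /negbTE sb1.
have iotaS m k : iota m k.+1 = rcons (iota m k) (m + k)%N by rewrite -cats1 -addn1 iotaD.
by rewrite /maxidx !iotaS !filter_rcons !add1n sb1 sb eqxx last_rcons.
Qed.

Section UnitStepWalks.
Variables (N : nat) (s : seq int).
Hypothesis s_steps : unit_steps N s.

Lemma walk_ivt p q v : (p <= q <= N)%N -> s`_p <= v <= s`_q ->
  exists2 i, (p <= i <= q)%N & s`_i = v.
Proof.
case/andP=> pq; move: (q - p)%N (subnKC pq) => d <- {q pq}.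
elim: d p => [|d IH] p pdN /andP[pv].
  by rewrite addn0 => vp; exists p; lia.
rewrite -addSnnS => vpd; have [spv|spv] := eqVneq s`_p v.
  by exists p; lia.
have step : `|s`_p.+1 - s`_p| = 1 by apply: s_steps; lia.
have [||i pi si] := IH p.+1; [lia | lia |].
by exists i; lia.
Qed.

Lemma walk_parity i : s`_0 = 0 -> (i <= N)%N -> exists k : int, s`_i = i%:R - 2 * k.
Proof.
move=> s0; elim: i => [|i IH] iN; first by exists 0; rewrite s0.
have [k sk] := IH (ltnW iN).
have step : `|s`_i.+1 - s`_i| = 1 by apply: s_steps; lia.
have [up|down] : s`_i.+1 = s`_i + 1 \/ s`_i.+1 = s`_i - 1 by lia.
  by exists k; lia.
by exists (k + 1); lia.
Qed.

Lemma walk_hits v : (0 < N)%N -> s`_1 <= v <= prefix_max s N ->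
  has (fun i => s`_i == v) (iota 1 N).
Proof.
move=> N_gt0 /andP[s1v vmax]; have [i iN si] := prefix_max_attained s N_gt0.
have [||j ij sj] := walk_ivt (p := 1) (q := i) (v := v); [lia | lia |].
by apply/hasP; exists j; [rewrite mem_iota; lia | apply/eqP].
Qed.

Lemma minidx_le_prefix_max v l : (0 < N)%N -> s`_1 <= v <= prefix_max s N ->
  (1 <= l <= N)%N -> (minidx s v N <= l)%N = (v <= prefix_max s l).
Proof.
move=> N_gt0 vrange lN; have [hit1 hitv hitmin] := minidxP (walk_hits N_gt0 vrange).
apply/idP/idP => [hitl | vl].
  by rewrite -[v]hitv (le_trans (le_prefix_max _ _) (prefix_max_homo s hitl)) //; lia.
rewrite leqNgt; apply/negP => lhit.
have [|i il si] := prefix_max_attained s (l := l); first lia.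
have [||j ij sj] := walk_ivt (p := 1) (q := i) (v := v); [lia | lia |].
suff /hitmin : (1 <= j < minidx s v N)%N by rewrite sj eqxx.
lia.
Qed.

Lemma walk_before_first_hit v : (0 < N)%N -> s`_1 < v <= prefix_max s N ->
  let j := minidx s v N in
  [/\ (1 < j)%N, s`_j.-1 = v - 1 & prefix_max s j.-1 = v - 1].
Proof.
move=> N_gt0 vrange; have vrange' : s`_1 <= v <= prefix_max s N by lia.
have [j1 sj _] := minidxP (walk_hits N_gt0 vrange'); set j := minidx s v N in j1 sj *.
have j_gt1 : (1 < j)%N.
  rewrite ltnNge; apply/negP => j_le1; have j_eq1 : j = 1%N by lia.
  by move: sj; rewrite j_eq1; lia.
have Rj : ~~ (v <= prefix_max s j.-1).
  by rewrite -(minidx_le_prefix_max (l := j.-1) N_gt0 vrange') -/j; lia.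
have step : `|s`_j - s`_j.-1| = 1 by apply: s_steps; lia.
have := le_prefix_max s (i := j.-1) (l := j.-1).
by split=> //; lia.
Qed.

Lemma prefix_max_revisited l : (1 <= l <= N)%N -> prefix_max s l < prefix_max s N ->
  exists2 i, (l <= i < N)%N & s`_i = prefix_max s l /\ prefix_max s i = prefix_max s l.
Proof.
move=> lN lt_max; have N_gt0 : (0 < N)%N by lia.
have s1_le := le_prefix_max s (i := 1) (l := l).
have vrange : s`_1 < prefix_max s l + 1 <= prefix_max s N by lia.
have [j_gt1 sj Rj] := walk_before_first_hit N_gt0 vrange.
have vrange' : s`_1 <= prefix_max s l + 1 <= prefix_max s N by lia.
have [jN _ _] := minidxP (walk_hits N_gt0 vrange').
have lj := minidx_le_prefix_max (l := l) N_gt0 vrange' lN.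
by exists (minidx s (prefix_max s l + 1) N).-1; lia.
Qed.

End UnitStepWalks.

Lemma walkP n (s : seq int) :
  reflect [/\ size s = (2 * n).+1, s`_0 = 0 & unit_steps (2 * n) s] (walk n s).
Proof.
apply: (iffP and3P) => [[/eqP sz /eqP s0 /allP st] | [sz s0 st]].
  by split=> // i iN; apply/eqP/st; rewrite mem_iota; lia.
split; [exact/eqP | exact/eqP | apply/allP => i; rewrite mem_iota => iN].
by apply/eqP/st; lia.
Qed.

Lemma An'P n (s : seq int) :
  s \in An' n -> [/\ (0 < n)%N, walk n s, s`_1 = 1 & s`_(2 * n) = 0].
Proof.
rewrite unfold_in => /and3P[w s1_gt0 /eqP sN]; have /walkP[sz s0 st] := w.
have n_gt0 : (0 < n)%N.
  by case: n sz {w st sN} => // sz; rewrite nth_default ?sz in s1_gt0.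
by have := st 1%N; rewrite s0; split=> //; lia.
Qed.

Definition pitman (s : seq int) : seq int :=
  mkseq (fun l => if l == 0%N then 0 else 2 * prefix_max s l - s`_l) (size s).

Definition pitman_inv (t : seq int) : seq int :=
  let N := (size t).-1 in
  mkseq (fun l => if l == 0%N then 0 else
    2 * Num.min (suffix_min t N l) (t`_N %/ 2)%Z - t`_l) (size t).

Lemma nth_pitman0 (s : seq int) : (0 < size s)%N -> (pitman s)`_0 = 0.
Proof. by move=> s_gt0; rewrite nth_mkseq. Qed.

Lemma nth_pitman (s : seq int) l : (0 < l < size s)%N ->
  (pitman s)`_l = 2 * prefix_max s l - s`_l.
Proof. by case/andP=> l_gt0 ls; rewrite nth_mkseq // gtn_eqF. Qed.

Lemma nth_pitman_inv0 (t : seq int) : (0 < size t)%N -> (pitman_inv t)`_0 = 0.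
Proof. by move=> t_gt0; rewrite nth_mkseq. Qed.

Lemma nth_pitman_inv (t : seq int) l : (0 < l < size t)%N -> (pitman_inv t)`_l =
  2 * Num.min (suffix_min t (size t).-1 l) (t`_(size t).-1 %/ 2)%Z - t`_l.
Proof. by case/andP=> l_gt0 lt; rewrite nth_mkseq // gtn_eqF. Qed.

Lemma pitman_in_Bn' n (s : seq int) : walk n s -> s`_1 = 1 -> pitman s \in Bn' n.
Proof.
case/walkP=> sz s0 st s1; have T_l l : (0 < l <= 2 * n)%N ->
    (pitman s)`_l = 2 * prefix_max s l - s`_l.
  by move=> lN; rewrite nth_pitman // sz.
have R_ge l : (0 < l)%N -> s`_l <= prefix_max s l /\ s`_1 <= prefix_max s l.
  by move=> l_gt0; split; apply: le_prefix_max; lia.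
apply/andP; split.
  apply/walkP; split; first by rewrite size_mkseq.
    by rewrite nth_pitman0 ?sz.
  case=> [|[|l]] lN //=; rewrite T_l //.
    by rewrite nth_pitman0 ?sz // prefix_max1 s1.
  rewrite T_l ?prefix_maxS; last lia.
  have step : `|s`_l.+2 - s`_l.+1| = 1 by apply: st.
  by have := R_ge l.+1 isT; lia.
apply/allP => l; rewrite mem_iota => lN; rewrite T_l; last lia.
by have := R_ge l; lia.
Qed.

Section FirstStepUpBridges.
Variables (n : nat) (s : seq int).
Hypothesis sA : s \in An' n.

Let n_gt0 : (0 < n)%N. Proof. by case/An'P: sA. Qed.
Let s_size : size s = (2 * n).+1. Proof. by case/An'P: sA => _ /walkP[]. Qed.
Let s_steps : unit_steps (2 * n) s. Proof. by case/An'P: sA => _ /walkP[]. Qed.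
Let s1 : s`_1 = 1. Proof. by case/An'P: sA. Qed.
Let s0 : s`_0 = 0. Proof. by case/An'P: sA => _ /walkP[]. Qed.
Let sN : s`_(2 * n) = 0. Proof. by case/An'P: sA. Qed.

Lemma Mx_prefix_max : Mx s = prefix_max s (2 * n).
Proof. by rewrite /Mx /prefix_max s_size. Qed.

Lemma MnE : Mx s = (Mn s)%:R /\ (0 < Mn s)%N.
Proof.
have := le_prefix_max s (i := 1) (l := 2 * n).
by rewrite /Mn Mx_prefix_max s1; lia.
Qed.

Lemma prefix_max_range l : (1 <= l <= 2 * n)%N -> 1 <= prefix_max s l <= (Mn s)%:R.
Proof.
move=> lN; have [MxE _] := MnE; rewrite -MxE Mx_prefix_max -s1.
by rewrite le_prefix_max ?prefix_max_homo //; lia.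
Qed.

Local Notation hit k := (minidx s k%:R (2 * n)).

Lemma hit_range k : (1 <= k <= Mn s)%N -> s`_1 <= k%:R <= prefix_max s (2 * n).
Proof. by have [] := MnE; rewrite s1 -Mx_prefix_max; lia. Qed.

Lemma hitP k : (1 <= k <= Mn s)%N ->
  [/\ (1 <= hit k <= 2 * n)%N, s`_(hit k) = k%:R
    & forall j, (1 <= j < hit k)%N -> s`_j != k%:R].
Proof. by move=> kM; apply/minidxP/walk_hits; rewrite ?muln_gt0 ?hit_range. Qed.

Lemma hit_le k l : (1 <= k <= Mn s)%N -> (1 <= l <= 2 * n)%N ->
  (hit k <= l)%N = (k%:R <= prefix_max s l).
Proof. by move=> kM; apply: minidx_le_prefix_max; rewrite ?muln_gt0 ?hit_range. Qed.

Lemma a_auxE j : (j < Mn s)%N -> a_aux s j = hit (Mn s - j).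
Proof.
have [MxE M_gt0] := MnE.
elim: j => [|j IH] jM /=; first by rewrite subn0 -MxE s_size.
rewrite IH 1?ltnW //; set k := (Mn s - j.+1)%N.
have -> : (Mn s - j = k.+1)%N by rewrite /k; lia.
have -> : Mx s - j.+1%:R = k%:R by rewrite MxE /k; lia.
have [hitk1 sk1 _] := hitP (k := k.+1) ltac:(lia).
apply: minidx_shrink; first by apply: walk_hits; rewrite ?muln_gt0 ?hit_range //; lia.
rewrite hit_le; last by lia.
  by have := le_prefix_max s (i := hit k.+1) (l := hit k.+1); rewrite sk1; lia.
by lia.
Qed.

Lemma a_E k : (1 <= k <= Mn s)%N -> a_ s k = hit k.
Proof. by move=> kM; rewrite /a_ a_auxE ?subKn //; lia. Qed.

Lemma b_E k : (1 <= k < Mn s)%N -> b_ s k = (a_ s k.+1).-1.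
Proof.
move=> kM; have [MxE _] := MnE.
have [||hit_gt1 s_before _] := walk_before_first_hit s_steps (v := k.+1%:R).
- by rewrite muln_gt0.
- by have := hit_range (k := k.+1); lia.
have [_ s_hit _] := hitP (k := k.+1) ltac:(lia).
rewrite /b_ a_E; last lia.
rewrite -{1}(ltn_predK hit_gt1); apply: maxidx_last; first lia.
  by rewrite s_before; lia.
by rewrite (ltn_predK hit_gt1) s_hit; lia.
Qed.

Lemma mem_ab_interval m l : (1 <= m < Mn s)%N -> (1 <= l <= 2 * n)%N ->
  (a_ s m <= l <= b_ s m)%N = (prefix_max s l == m%:R).
Proof.
move=> mM lN; rewrite b_E // !a_E; [| lia | lia].
by have := hit_le (k := m) (l := l); have := hit_le (k := m.+1) (l := l); lia.
Qed.

Lemma ab_intervals_at l : (1 <= l <= 2 * n)%N ->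
  [seq m <- iota 1 (Mn s).-1 | (a_ s m <= l <= b_ s m)%N] =
  if (`|prefix_max s l|%N < Mn s)%N then [:: `|prefix_max s l|%N] else [::].
Proof.
move=> lN; have R_range := prefix_max_range lN.
rewrite (@eq_in_filter _ _ (pred1 `|prefix_max s l|%N)) => [|m]; last first.
  by rewrite mem_iota => mM; rewrite mem_ab_interval //=; lia.
case: ifP => RM; first by rewrite filter_pred1_uniq ?iota_uniq // mem_iota; lia.
apply/eqP; rewrite -[_ == _]negbK -has_filter; apply/hasPn => m.
by rewrite mem_iota => mM /=; lia.
Qed.

Lemma Phi1_well_defined_An' : Phi1_well_defined n s.
Proof.
have [MxE M_gt0] := MnE.
split.
- by rewrite MxE; apply/walk_hits; rewrite ?muln_gt0 ?hit_range //; lia.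
- move=> k kM; have [hit_k s_hit _] := hitP (k := k) ltac:(lia).
  have [hit_k1 s_hit1 _] := hitP (k := k.+1) ltac:(lia).
  apply/hasP; exists (hit k); last exact/eqP.
  rewrite mem_iota a_E; last lia.
  have := hit_le (k := k) (l := hit k.+1).
  by have := le_prefix_max s (i := hit k.+1) (l := hit k.+1); rewrite s_hit1; lia.
- move=> l lN; rewrite -size_filter ab_intervals_at // a_E; last lia.
  rewrite hit_le //; last lia.
  by have := prefix_max_range lN; case: ifP => /=; lia.
Qed.

Lemma Phi1E : Phi1 s = pitman s.
Proof.
apply: (@eq_from_nth _ 0); first by rewrite !size_mkseq.
rewrite size_mkseq s_size => l lN; have [->|l_gt0] := posnP l.
  by rewrite nth_pitman0 ?nth_mkseq ?s_size.
rewrite nth_pitman ?s_size ?l_gt0 // nth_mkseq ?s_size // gtn_eqF //.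
rewrite ab_intervals_at; last lia.
by have := prefix_max_range (l := l); case: ifP => /=; lia.
Qed.

Lemma suffix_min_pitman l : (1 <= l <= 2 * n)%N ->
  Num.min (suffix_min (pitman s) (2 * n) l) (prefix_max s (2 * n)) = prefix_max s l.
Proof.
move=> lN; have R_homo := prefix_max_homo s.
have T_ge : prefix_max s l <= suffix_min (pitman s) (2 * n) l.
  apply: suffix_min_ge => [|i iN]; first lia.
  rewrite nth_pitman ?s_size; last lia.
  have := le_prefix_max s (i := i) (l := i); have := R_homo l i.
  by lia.
have := R_homo l (2 * n)%N; case: (ltP (prefix_max s l) (prefix_max s (2 * n))) => lt_max.
  have [i li [si Ri]] := prefix_max_revisited s_steps lN lt_max.
  have := suffix_min_le (pitman s) (l := l) (i := i) (N := (2 * n)%N).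
  by rewrite nth_pitman ?s_size; lia.
by lia.
Qed.

Lemma pitmanK : pitman_inv (pitman s) = s.
Proof.
have T_size : size (pitman s) = (2 * n).+1 by rewrite size_mkseq.
have T_N : ((pitman s)`_(2 * n) %/ 2)%Z = prefix_max s (2 * n).
  by rewrite nth_pitman ?s_size ?sN ?subr0 ?mulKz //; lia.
apply: (@eq_from_nth _ 0); first by rewrite size_mkseq T_size s_size.
rewrite size_mkseq T_size => l lN; have [->|l_gt0] := posnP l.
  by rewrite nth_pitman_inv0 ?T_size ?s0.
rewrite nth_pitman_inv ?T_size ?l_gt0 // T_N suffix_min_pitman; last lia.
by rewrite nth_pitman ?s_size ?l_gt0 //; lia.
Qed.

End FirstStepUpBridges.

Section PositiveWalks.
Variables (n : nat) (t : seq int).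
Hypotheses (n_gt0 : (0 < n)%N) (tB : t \in Bn' n).

Let t_size : size t = (2 * n).+1. Proof. by case/andP: tB => /walkP[]. Qed.
Let t0 : t`_0 = 0. Proof. by case/andP: tB => /walkP[]. Qed.
Let t_steps : unit_steps (2 * n) t. Proof. by case/andP: tB => /walkP[]. Qed.

Let t_pos i : (1 <= i <= 2 * n)%N -> 0 < t`_i.
Proof. by case/andP: tB => _ /allP t_pos iN; apply: t_pos; rewrite mem_iota; lia. Qed.

Let t1 : t`_1 = 1.
Proof.
have step : `|t`_1 - t`_0| = 1 by apply: t_steps; rewrite muln_gt0.
by have := t_pos (i := 1); rewrite t0 in step; lia.
Qed.

Local Notation M := (t`_(2 * n) %/ 2)%Z.
Local Notation J l := (suffix_min t (2 * n) l).

Let tN : t`_(2 * n) = 2 * M.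
Proof.
have [k ->] := walk_parity t_steps t0 (leqnn _).
have -> : (2 * n)%:R - 2 * k = 2 * (n%:R - k) :> int by lia.
by rewrite mulKz.
Qed.

Let M_gt0 : 0 < M.
Proof. by have := t_pos (i := (2 * n)%N); rewrite tN; lia. Qed.

Let J_range l : (1 <= l <= 2 * n)%N -> 1 <= J l <= t`_l.
Proof.
move=> lN; rewrite suffix_min_le ?andbT; last lia.
by apply: suffix_min_ge => [|i iN]; [lia | apply: t_pos; lia].
Qed.

Let J_step l : (1 <= l < 2 * n)%N ->
  [/\ J l = Num.min t`_l (J l.+1), J l.+1 <= t`_l.+1 & `|t`_l.+1 - t`_l| = 1].
Proof.
move=> lN; rewrite suffix_min_rec; last lia.
by split=> //; [have := J_range (l := l.+1) | apply: t_steps]; lia.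
Qed.

Lemma pitman_invE l : (1 <= l <= 2 * n)%N ->
  (pitman_inv t)`_l = 2 * Num.min (J l) M - t`_l.
Proof. by move=> lN; rewrite nth_pitman_inv t_size //; lia. Qed.

Lemma pitman_inv_in_An' : pitman_inv t \in An' n.
Proof.
have s1 : (pitman_inv t)`_1 = 1.
  by rewrite pitman_invE ?t1; [have := J_range (l := 1); rewrite t1; lia | lia].
apply/and3P; split; last first.
- rewrite pitman_invE ?suffix_minN; last lia.
  by rewrite tN; lia.
- by rewrite s1.
apply/walkP; split; first by rewrite size_mkseq.
  by rewrite nth_pitman_inv0 ?t_size.
case=> [|[|l]] lN //; first by rewrite s1 nth_pitman_inv0 ?t_size.
rewrite /= !pitman_invE; [| lia | lia].
have /J_step[J_rec J_le step] : (1 <= l.+1 < 2 * n)%N by lia.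
by have := J_range (l := l.+1); lia.
Qed.

Lemma prefix_max_pitman_inv l : (1 <= l <= 2 * n)%N ->
  prefix_max (pitman_inv t) l = Num.min (J l) M.
Proof.
elim: l => [|[|l] IH] lN //.
  rewrite prefix_max1 pitman_invE //.
  by have := J_range (l := 1); lia.
rewrite prefix_maxS IH; last lia.
rewrite pitman_invE //.
have /J_step[J_rec J_le step] : (1 <= l.+1 < 2 * n)%N by lia.
by have := J_range (l := l.+1); lia.
Qed.

Lemma pitman_invK : pitman (pitman_inv t) = t.
Proof.
have s_size : size (pitman_inv t) = (2 * n).+1 by rewrite size_mkseq.
apply: (@eq_from_nth _ 0); first by rewrite size_mkseq s_size t_size.
rewrite size_mkseq s_size => l lN; have [->|l_gt0] := posnP l.
  by rewrite nth_pitman0 ?s_size ?t0.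
by rewrite nth_pitman ?s_size ?l_gt0 // prefix_max_pitman_inv ?pitman_invE; lia.
Qed.

End PositiveWalks.

Theorem theorem1 (n : nat) (hn : (0 < n)%N) :
  {in An' n, forall s, Phi1_well_defined n s} /\
  {in An' n, forall s, Phi1 s \in Bn' n} /\
  {in An' n &, injective Phi1} /\
  (forall t, t \in Bn' n -> exists2 s, s \in An' n & Phi1 s = t).
Proof.
have Phi1_pitman : {in An' n, Phi1 =1 pitman} by move=> s; exact: Phi1E.
split; first exact: Phi1_well_defined_An'.
split.
  move=> s sA; rewrite Phi1_pitman //.
  by case/An'P: sA => _ walk_s s1 _; apply: pitman_in_Bn'.
split.
  apply: (can_in_inj (g := pitman_inv)) => s sA.
  by rewrite Phi1_pitman // (pitmanK sA).
move=> t tB; have sA := pitman_inv_in_An' hn tB.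
by exists (pitman_inv t); rewrite // Phi1_pitman // (pitman_invK hn tB).
Qed.
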